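(* Let $A\in\mathbb{R}^{m\times n}$ and let $A=P_1-R_1+S_1=P_2-R_2+S_2$ be two double proper regular (respectively, double proper weak regular) splittings of $A$ such that $N(R_2)\supseteq N(P_2)$, $R(R_2)\subseteq R(P_2)$, $-1\notin\sigma(R_2P_1^{\dagger})$ and $\widehat{\mathcal{A}}^{\dagger}\geq 0$, where $\widehat{\mathcal{A}}=(I+R_2P_1^{\dagger})A$. Then $\rho(\mathcal{W}_{12})<1$, where $$\mathcal{W}_{12}=\begin{pmatrix} P_2^{\dagger}R_2P_1^{\dagger}R_1-P_2^{\dagger}S_2 & -P_2^{\dagger}R_2P_1^{\dagger}S_1\\ I & 0\end{pmatrix}.$$
   Context: For $M\in\mathbb{R}^{m\times n}$, $M^{\dagger}$ is its Moore–Penrose inverse, $R(M)$, $N(M)$ its range and null space; inequalities are entrywise; $\rho$ is the spectral radius, $\sigma$ the spectrum. A double splitting $A=P-R+S$ is a double proper splitting if $R(P)=R(A)$ and $N(P)=N(A)$; it is double proper regular if moreover $P^{\dagger}\geq0$, $R\geq0$, $S\leq0$; double proper weak regular if moreover $P^{\dagger}\geq 0$, $P^{\dagger}R\geq 0$, $P^{\dagger}S\leq 0$. *)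

From HB Require Import structures.
From mathcomp Require Import all_boot all_order all_algebra.
From mathcomp Require Import reals complex.
From Stdlib Require Import ClassicalEpsilon.
Set Implicit Arguments. Unset Strict Implicit. Unset Printing Implicit Defensive.
Import Order.TTheory GRing.Theory Num.Theory.
Local Open Scope ring_scope.

Section Defs.
Variable R : realType.

Definition is_MP_inverse m n (A : 'M[R]_(m, n)) (X : 'M[R]_(n, m)) : Prop :=
  [/\ A *m X *m A = A, X *m A *m X = X,
      (A *m X)^T = A *m X & (X *m A)^T = X *m A].

(* The Moore--Penrose inverse A^dagger (chosen as the unique matrix
   satisfying the Penrose equations; it always exists for real matrices). *)
Definition pinv m n (A : 'M[R]_(m, n)) : 'M[R]_(n, m) :=
  epsilon (inhabits 0) (is_MP_inverse A).

Definition range_sp m n (M : 'M[R]_(m, n)) (y : 'cV[R]_m) : Prop :=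
  exists x : 'cV[R]_n, M *m x = y.
Definition null_sp m n (M : 'M[R]_(m, n)) (x : 'cV[R]_n) : Prop :=
  M *m x = 0.

Definition mx_ge0 m n (M : 'M[R]_(m, n)) : Prop := forall i j, 0 <= M i j.
Definition mx_le0 m n (M : 'M[R]_(m, n)) : Prop := forall i j, M i j <= 0.

Definition double_proper_splitting m n (A P Rm S : 'M[R]_(m, n)) : Prop :=
  [/\ A = P - Rm + S,
      (forall y, range_sp P y <-> range_sp A y) &
      (forall x, null_sp P x <-> null_sp A x)].

Definition double_proper_regular m n (A P Rm S : 'M[R]_(m, n)) : Prop :=
  [/\ double_proper_splitting A P Rm S, mx_ge0 (pinv P), mx_ge0 Rm & mx_le0 S].

Definition double_proper_weak_regular m n (A P Rm S : 'M[R]_(m, n)) : Prop :=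
  [/\ double_proper_splitting A P Rm S, mx_ge0 (pinv P),
      mx_ge0 (pinv P *m Rm) & mx_le0 (pinv P *m S)].

Definition cmx n (M : 'M[R]_n) : 'M[R[i]]_n := map_mx (fun x => x%:C%C) M.

Definition spectrum n (M : 'M[R]_n) : pred R[i] :=
  fun z => eigenvalue (cmx M) z.

Definition eigen_seq n (M : 'M[R]_n) : seq R[i] :=
  sval (closed_field_poly_normal (char_poly (cmx M))).

Definition spectral_radius n (M : 'M[R]_n) : R :=
  \big[Num.max/0]_(z <- eigen_seq M) ComplexField.Normc.normc z.

End Defs.

From HB Require Import structures.
From mathcomp Require Import all_boot all_order all_algebra.
From mathcomp Require Import reals complex.
From Stdlib Require Import ClassicalEpsilon.
Set Implicit Arguments. Unset Strict Implicit. Unset Printing Implicit Defensive.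
Import Order.TTheory GRing.Theory Num.Theory.
Local Open Scope ring_scope.

(* As N(P1) = N(A) = N(P2) lies in N(R2), R2 P1† P1 = R2,
   and comparing the two splittings gives Â = P2 - V with
   V = R2 P1† R1 - S2 - R2 P1† S1, so that W12 = [[B, -D], [I, 0]] with
   P2† V = B - D, B >= 0 >= D.  Since I + R2 P1† is invertible and maps R(A) into
   itself, Â = P2 - V is a proper splitting, whence Â† = P2† + P2† V Â†.
   If v W12 = lam v with |lam| >= 1 and v = (z, z'), then w = |z| satisfies
   w <= w P2† V entrywise; multiplying the identity for Â† by w and using
   P2†, Â† >= 0 forces w P2† = 0, hence w = 0 and v = 0. *)

Lemma rV_mulmx_tr_eq0 (F : realFieldType) k (u : 'rV[F]_k) : u *m u^T = 0 -> u = 0.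
Proof.
move=> /matrixP /(_ 0 0); rewrite !mxE => sum0.
have sq_ge0 i : true -> 0 <= u 0 i * u^T i 0 by rewrite mxE -expr2 sqr_ge0.
apply/rowP => i; have /eqP := psumr_eq0P sq_ge0 sum0 (i := i) isT.
by rewrite mxE -expr2 sqrf_eq0 mxE => /eqP.
Qed.

Lemma row_free_mulmx_tr_unit (F : realFieldType) r k (M : 'M[F]_(r, k)) :
  row_free M -> M *m M^T \in unitmx.
Proof.
move=> freeM; rewrite -row_free_unit; apply: inj_row_free => v vMM0.
have : (v *m M) *m (v *m M)^T = 0 by rewrite trmx_mul !mulmxA -(mulmxA v) vMM0 mul0mx.
by move/rV_mulmx_tr_eq0/eqP; rewrite mulmx_free_eq0 // => /eqP.
Qed.

Section MoorePenrose.
Variable R : realType.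

Lemma is_MP_inverse_full_rank_factor m r n (F : 'M[R]_(m, r)) (G : 'M[R]_(r, n)) :
  G *m G^T \in unitmx -> F^T *m F \in unitmx ->
  is_MP_inverse (F *m G) (G^T *m invmx (G *m G^T) *m invmx (F^T *m F) *m F^T).
Proof.
move=> uG uF; set iG := invmx (G *m G^T); set iF := invmx (F^T *m F).
have iGT : iG^T = iG by rewrite /iG trmx_inv trmx_mul trmxK.
have iFT : iF^T = iF by rewrite /iF trmx_inv trmx_mul trmxK.
have GK p (X : 'M[R]_(p, r)) : X *m G *m G^T *m iG = X.
  by rewrite -[RHS]mulmx1 -(mulmxV uG) !mulmxA.
have FK p (X : 'M[R]_(p, r)) : X *m iF *m F^T *m F = X.
  by rewrite -[RHS]mulmx1 -(mulVmx uF) !mulmxA.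
have AX : F *m G *m (G^T *m iG *m iF *m F^T) = F *m iF *m F^T by rewrite !mulmxA GK.
have XA : G^T *m iG *m iF *m F^T *m (F *m G) = G^T *m iG *m G by rewrite !mulmxA FK.
split.
- by rewrite AX !mulmxA FK.
- by rewrite XA !mulmxA GK.
- by rewrite AX !trmx_mul trmxK iFT !mulmxA.
- by rewrite XA !trmx_mul trmxK iGT !mulmxA.
Qed.

Lemma pinvP m n (A : 'M[R]_(m, n)) : is_MP_inverse A (pinv A).
Proof.
apply: epsilon_spec; rewrite -[A in is_MP_inverse A]mulmx_base.
have uG := row_free_mulmx_tr_unit (row_base_free A).
have uF : (col_base A)^T *m (col_base A) \in unitmx.
  rewrite -{2}[col_base A]trmxK row_free_mulmx_tr_unit // /row_free mxrank_tr.
  exact: col_base_full.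
by eexists; apply: is_MP_inverse_full_rank_factor.
Qed.

Lemma is_MP_inverse_tr m n (M : 'M[R]_(m, n)) X :
  is_MP_inverse M X -> is_MP_inverse M^T X^T.
Proof.
case=> MXM XMX symMX symXM.
split; rewrite -!trmx_mul.
- by rewrite mulmxA MXM.
- by rewrite mulmxA XMX.
- by rewrite !symXM.
- by rewrite !symMX.
Qed.

Lemma MP_inverse_mulmxK m p n (M : 'M[R]_(m, n)) X (N : 'M[R]_(p, n)) :
  is_MP_inverse M X -> (N <= M)%MS -> N *m X *m M = N.
Proof. by case=> MXM _ _ _ /submxP[Z ->]; rewrite -2!mulmxA [M *m _]mulmxA MXM. Qed.

Lemma MP_inverse_sub m p n (M : 'M[R]_(m, n)) X (N : 'M[R]_(p, n)) Y :
  is_MP_inverse M X -> is_MP_inverse N Y -> (N <= M)%MS -> X *m M *m Y = Y.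
Proof.
move=> [MXM _ _ symXM] [_ YNY _ symYN] /submxP[Z eN].
have XMMT : X *m M *m M^T = M^T by rewrite -{1}symXM -trmx_mul mulmxA MXM.
have XMNT : X *m M *m N^T = N^T by rewrite eN trmx_mul mulmxA XMMT.
have YNT : Y = N^T *m (Y^T *m Y) by rewrite mulmxA -trmx_mul symYN YNY.
by rewrite YNT mulmxA XMNT.
Qed.

Lemma MP_inverse_sup m n p (M : 'M[R]_(m, n)) X (N : 'M[R]_(m, p)) Y :
  is_MP_inverse M X -> is_MP_inverse N Y -> (M^T <= N^T)%MS -> X *m (N *m Y) = X.
Proof.
move=> /is_MP_inverse_tr MXT /is_MP_inverse_tr NYT /(MP_inverse_sub NYT MXT).
by move/(congr1 trmx); rewrite !trmx_mul !trmxK mulmxA.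
Qed.

Lemma MP_inverse_proper_splitting m n (M P : 'M[R]_(m, n)) X Y :
  is_MP_inverse M X -> is_MP_inverse P Y -> (M <= P)%MS -> (P^T <= M^T)%MS ->
  X = Y + Y *m (P - M) *m X.
Proof.
move=> MX PY sMP sPM.
rewrite mulmxBr mulmxBl (MP_inverse_sub PY MX sMP) -mulmxA (MP_inverse_sup PY MX sPM).
by rewrite addrC subrK.
Qed.
End MoorePenrose.

Section Subspaces.
Variable R : realType.

Lemma null_sp_submx m p n (M : 'M[R]_(m, n)) (N : 'M[R]_(p, n)) :
  (forall x, null_sp M x -> null_sp N x) -> (N <= M)%MS.
Proof.
move=> sub; rewrite submxE; apply/eqP/matrixP => i j.
have /sub : null_sp M (col j (cokermx M)).
  by rewrite /null_sp colE mulmxA mulmx_coker mul0mx.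
by rewrite /null_sp colE mulmxA -colE => /colP/(_ i); rewrite !mxE.
Qed.

Lemma range_sp_submx m n p (M : 'M[R]_(m, n)) (N : 'M[R]_(m, p)) :
  (forall y, range_sp M y -> range_sp N y) -> (M^T <= N^T)%MS.
Proof.
move=> sub; apply/row_subP => j; rewrite -tr_col.
have [z <-] : range_sp N (col j M) by apply: sub; exists (delta_mx j 0); rewrite colE.
by rewrite trmx_mul submxMl.
Qed.

Lemma double_proper_splitting_eqmx m n (A P Rm S : 'M[R]_(m, n)) :
  double_proper_splitting A P Rm S -> (A == P)%MS && (A^T == P^T)%MS.
Proof.
case=> _ range_eq null_eq.
apply/andP; split; apply/andP; split.
- by apply: null_sp_submx => x /null_eq.
- by apply: null_sp_submx => x /null_eq.
- by apply: range_sp_submx => y /range_eq.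
- by apply: range_sp_submx => y /range_eq.
Qed.
End Subspaces.

Section NonnegativeMatrices.
Variable C : numDomainType.

Lemma mulmx_ge0 p q r (X : 'M[C]_(p, q)) (Y : 'M[C]_(q, r)) :
  (forall i j, 0 <= X i j) -> (forall i j, 0 <= Y i j) -> forall i j, 0 <= (X *m Y) i j.
Proof. by move=> X0 Y0 i j; rewrite mxE sumr_ge0 // => k _; rewrite mulr_ge0. Qed.

Lemma mulmx_ge0_le0 p q r (X : 'M[C]_(p, q)) (Y : 'M[C]_(q, r)) :
  (forall i j, 0 <= X i j) -> (forall i j, Y i j <= 0) -> forall i j, (X *m Y) i j <= 0.
Proof.
move=> X0 Y0 i j; rewrite -oppr_ge0.
have := mulmx_ge0 X0 (_ : forall i j, 0 <= (- Y) i j) i j.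
by rewrite mulmxN mxE; apply=> k l; rewrite mxE oppr_ge0.
Qed.

Lemma mx_sub_ge0 p q (X Y : 'M[C]_(p, q)) :
  (forall i j, 0 <= X i j) -> (forall i j, Y i j <= 0) -> forall i j, 0 <= (X - Y) i j.
Proof. by move=> X0 Y0 i j; rewrite !mxE subr_ge0 (le_trans (Y0 i j)). Qed.

Lemma normr_mulmx_le p q r (z : 'M[C]_(p, q)) (B : 'M[C]_(q, r)) :
  (forall i j, 0 <= B i j) -> forall i j, `|(z *m B) i j| <= (map_mx Num.norm z *m B) i j.
Proof.
move=> B0 i j; rewrite !mxE (le_trans (ler_norm_sum _ _ _)) // ler_sum // => k _.
by rewrite normrM (ger0_norm (B0 k j)) mxE.
Qed.

Lemma subinvariant_eq0 p n m (w : 'M[C]_(p, n)) (P : 'M[C]_(n, m)) (V : 'M[C]_(m, n))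
    (X : 'M[C]_(n, m)) :
  (forall i j, 0 <= w i j) -> (forall i j, 0 <= P i j) -> (forall i j, 0 <= X i j) ->
  X = P + P *m V *m X -> (forall i j, w i j <= (w *m (P *m V)) i j) -> w = 0.
Proof.
move=> w0 P0 X0 eX sub; set d := w *m (P *m V) - w.
have d0 i j : 0 <= d i j by move: (sub i j); rewrite /d !mxE subr_ge0.
(* [w X = w P + (w + d) X] *)
have wPdX : w *m P + d *m X = 0.
  apply: (@addrI _ (w *m X)); rewrite addr0 addrCA -mulmxDl subrKC.
  by rewrite [in RHS]eX mulmxDr !mulmxA.
have wP0 : w *m P = 0.
  apply/matrixP => i k; move/matrixP/(_ i k)/eqP: wPdX.
  rewrite mxE [X in _ == X]mxE paddr_eq0 ?mulmx_ge0 // => /andP[/eqP -> _].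
  by rewrite mxE.
apply/matrixP => i j; rewrite mxE; apply/le_anti; rewrite w0 andbT.
by rewrite (le_trans (sub i j)) // mulmxA wP0 mul0mx mxE.
Qed.
End NonnegativeMatrices.

Lemma double_proper_regular_weak (R : realType) m n (A P Rm S : 'M[R]_(m, n)) :
  double_proper_regular A P Rm S -> double_proper_weak_regular A P Rm S.
Proof. by case=> sp P0 Rm0 S0; split; [| | exact: mulmx_ge0 | exact: mulmx_ge0_le0]. Qed.

Lemma submx_tr_mul_1_add (F : fieldType) m n (A : 'M[F]_(m, n)) (M : 'M[F]_m) :
  1%:M + M \in unitmx -> (M^T <= A^T)%MS -> (A^T <= ((1%:M + M) *m A)^T)%MS.
Proof.
move=> uK sMA; rewrite trmx_mul.
have sub : (A^T *m (1%:M + M)^T <= A^T)%MS.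
  by rewrite linearD /= trmx1 mulmxDr mulmx1 addmx_sub // (submx_trans (submxMl _ _)).
case: (mxrank_leqif_sup sub) => _ <-.
by rewrite mxrankMfree // row_free_unit unitmx_tr.
Qed.

Lemma splitting_mul_1_add (T : pzRingType) m n (A P1 R1 S1 P2 R2 S2 : 'M[T]_(m, n))
    (X : 'M[T]_(n, m)) :
  A = P1 - R1 + S1 -> A = P2 - R2 + S2 -> R2 *m X *m P1 = R2 ->
  P2 - (1%:M + R2 *m X) *m A = R2 *m X *m R1 - S2 - R2 *m X *m S1.
Proof.
move=> eA1 eA2 eR2.
have eRA : R2 *m X *m A = R2 - R2 *m X *m R1 + R2 *m X *m S1.
  by rewrite {1}eA1 mulmxDr mulmxBr eR2.
rewrite mulmxDl mul1mx eRA {1}eA2.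
by rewrite addrACA subrKA opprD opprB addrA addrCA subrr addr0 opprD addrA.
Qed.

Section Companion.
Variables (C : numDomainType) (n : nat) (B D : 'M[C]_n).
Hypotheses (B0 : forall i j, 0 <= B i j) (D0 : forall i j, D i j <= 0).

Lemma companion_abs_subinvariant (lam : C) (z : 'rV[C]_n) :
  1 <= `|lam| -> lam ^+ 2 *: z = lam *: (z *m B) - z *m D ->
  forall i j, map_mx Num.norm z i j <= (map_mx Num.norm z *m (B - D)) i j.
Proof.
move=> lam_ge1 ez i j; rewrite (ord1 i); set w := map_mx Num.norm z.
have lam_gt0 : 0 < `|lam| by rewrite (lt_le_trans ltr01).
have mD0 k l : 0 <= (- D) k l by rewrite mxE oppr_ge0.
have wB := normr_mulmx_le z B0 0 j.
have wD := normr_mulmx_le z mD0 0 j; rewrite mulmxN mxE normrN in wD.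
have wD0 : 0 <= (w *m - D) 0 j by rewrite mulmx_ge0 // => ? ?; rewrite mxE.
have ezj : lam ^+ 2 * z 0 j = lam * (z *m B) 0 j - (z *m D) 0 j.
  by move/matrixP/(_ 0 j): ez; rewrite !mxE.
(* |lam|^2 |z| <= |lam| |z| B - |z| D <= |lam| |z| (B - D) *)
have : `|lam| * (`|lam| * w 0 j) <= `|lam| * ((w *m B) 0 j + (w *m - D) 0 j).
  rewrite mulrA -expr2 -normrX mxE -normrM ezj (le_trans (ler_normB _ _)) //.
  by rewrite mulrDr lerD // ?(le_trans wD) ?ler_peMl // normrM ler_wpM2l.
rewrite ler_pM2l // mulmxDr => le_lam; rewrite [X in _ <= X]mxE (le_trans _ le_lam) //.
by rewrite ler_peMl // mxE.
Qed.

Lemma companion_eigenvector_eq0 m (P : 'M[C]_(n, m)) (V : 'M[C]_(m, n)) (X : 'M[C]_(n, m))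
    (lam : C) (v : 'rV[C]_(n + n)) :
  (forall i j, 0 <= P i j) -> (forall i j, 0 <= X i j) ->
  P *m V = B - D -> X = P + P *m V *m X ->
  1 <= `|lam| -> v *m block_mx B (- D) 1%:M 0 = lam *: v -> v = 0.
Proof.
move=> P0 X0 ePV eX lam_ge1; rewrite -[v]hsubmxK mul_row_block scale_row_mx.
set z1 := lsubmx v; set z2 := rsubmx v.
rewrite mulmx1 mulmx0 addr0 mulmxN => /eq_row_mx[E1 E2].
have ez2 : z2 = lam *: z1 - z1 *m B by rewrite -E1 addrC addKr.
have ez1 : lam ^+ 2 *: z1 = lam *: (z1 *m B) - z1 *m D.
  by rewrite E2 ez2 scalerBr scalerA expr2 addrC subrK.
have w0 : map_mx Num.norm z1 = 0.
  apply: (subinvariant_eq0 (P := P) (V := V) (X := X)) => //.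
    by move=> i j; rewrite mxE.
  by rewrite ePV; exact: companion_abs_subinvariant ez1.
have z10 : z1 = 0.
  by apply/matrixP => i j; move/matrixP/(_ i j)/eqP: w0; rewrite !mxE normr_eq0 => /eqP.
by rewrite ez2 z10 scaler0 mul0mx subr0 row_mx0.
Qed.
End Companion.

Section Spectrum.
Variable R : realType.

Lemma unitmx_1_add n (M : 'M[R]_n) : ~ spectrum M (-1) -> 1%:M + M \in unitmx.
Proof.
move=> notM; apply/negPn/negP => nuK; apply: notM.
rewrite /spectrum /eigenvalue /eigenspace kermx_eq0 row_free_unit.
have -> : cmx M - (-1)%:M = map_mx (real_complex R) (1%:M + M).
  by rewrite map_mxD map_mx1 addrC raddfN opprK.
by rewrite map_unitmx.
Qed.

Lemma spectrum_eigen_seq n (M : 'M[R]_n) z : z \in eigen_seq M -> spectrum M z.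
Proof.
rewrite /eigen_seq; case: closed_field_poly_normal => r /= char_r z_r.
rewrite /spectrum eigenvalue_root_char /root char_r hornerZ.
by move: z_r; rewrite -root_prod_XsubC => /rootP ->; rewrite mulr0.
Qed.

Lemma spectral_radius_lt1 n (M : 'M[R]_n) :
  (forall z, spectrum M z -> `|z| < 1) -> spectral_radius M < 1.
Proof.
move=> lt1; rewrite /spectral_radius big_seq bigmax_lt // => z /spectrum_eigen_seq/lt1.
by case: z => a b; rewrite normc_def (ltcR _ 1).
Qed.
End Spectrum.

Lemma companion_spectral_radius_lt1 (R : realType) n m (B D : 'M[R]_n) (P : 'M[R]_(n, m))
    (V : 'M[R]_(m, n)) (X : 'M[R]_(n, m)) :
  mx_ge0 B -> mx_le0 D -> mx_ge0 P -> mx_ge0 X -> P *m V = B - D -> X = P + P *m V *m X ->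
  spectral_radius (block_mx B (- D) 1%:M 0) < 1.
Proof.
move=> B0 D0 P0 X0 ePV eX; apply: spectral_radius_lt1 => z /eigenvalueP[v vW v0].
rewrite real_ltNge ?normr_real ?real1 //; apply/negP => z_ge1; case/eqP: v0.
pose c p q := @map_mx _ _ (real_complex R) p q.
have c_ge0 p q (Y : 'M[R]_(p, q)) : mx_ge0 Y -> forall i j, 0 <= c _ _ Y i j.
  by move=> Y0 i j; rewrite mxE ler0c.
apply: (@companion_eigenvector_eq0 _ _ (c _ _ B) (c _ _ D) _ _ _
          (c _ _ P) (c _ _ V) (c _ _ X) z).
- exact: c_ge0.
- by move=> i j; rewrite mxE -oppr_ge0 -rmorphN ler0c oppr_ge0.
- exact: c_ge0.
- exact: c_ge0.
- by rewrite /c -map_mxM ePV map_mxB.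
- by rewrite /c {1}eX map_mxD !map_mxM.
- exact: z_ge1.
- move: vW; rewrite /cmx -/(map_mx (real_complex R) _).
  by rewrite map_block_mx map_mxN map_mx1 map_mx0.
Qed.

Theorem theorem3p3 (R : realType) (m n : nat) (A P1 R1 S1 P2 R2 S2 : 'M[R]_(m, n)) :
  ((double_proper_regular A P1 R1 S1 /\ double_proper_regular A P2 R2 S2) \/
   (double_proper_weak_regular A P1 R1 S1 /\ double_proper_weak_regular A P2 R2 S2)) ->
  (forall x, null_sp P2 x -> null_sp R2 x) ->
  (forall y, range_sp R2 y -> range_sp P2 y) ->
  ~ spectrum (R2 *m pinv P1) (-1) ->
  mx_ge0 (pinv ((1%:M + R2 *m pinv P1) *m A)) ->
  spectral_radius
    (block_mx (pinv P2 *m R2 *m pinv P1 *m R1 - pinv P2 *m S2)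
              (- (pinv P2 *m R2 *m pinv P1 *m S1))
              (1%:M : 'M[R]_n) (0 : 'M[R]_n)) < 1.
Proof.
move=> splittings null_R2 range_R2 not_spec Ahat0.
have [[sp1 _ P1R1 P1S1] [sp2 P2p0 P2R2 P2S2]] :
    double_proper_weak_regular A P1 R1 S1 /\ double_proper_weak_regular A P2 R2 S2.
  by case: splittings => [[/double_proper_regular_weak ? /double_proper_regular_weak ?] | []].
have /andP[/eqmxP eqAP1 _] := double_proper_splitting_eqmx sp1.
have /andP[/eqmxP eqAP2 /eqmxP eqAP2T] := double_proper_splitting_eqmx sp2.
have sR2P1 : (R2 <= P1)%MS by rewrite -eqAP1 eqAP2 (null_sp_submx null_R2).
have sR2A : ((R2 *m pinv P1)^T <= A^T)%MS.
  by rewrite trmx_mul (submx_trans (submxMl _ _)) // eqAP2T (range_sp_submx range_R2).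
set Ahat := (1%:M + R2 *m pinv P1) *m A in Ahat0 *.
have eV : P2 - Ahat = R2 *m pinv P1 *m R1 - S2 - R2 *m pinv P1 *m S1.
  case: sp1 sp2 => [eA1 _ _] [eA2 _ _].
  by rewrite /Ahat (splitting_mul_1_add eA1 eA2) // (MP_inverse_mulmxK (pinvP P1)).
apply: (companion_spectral_radius_lt1 (P := pinv P2) (V := P2 - Ahat) (X := pinv Ahat)).
- by rewrite -mulmxA; exact: mx_sub_ge0 (mulmx_ge0 P2R2 P1R1) P2S2.
- by rewrite -mulmxA; exact: mulmx_ge0_le0 P2R2 P1S1.
- exact: P2p0.
- exact: Ahat0.
- by rewrite eV !mulmxBr !mulmxA.
apply: MP_inverse_proper_splitting (pinvP _) (pinvP _) _ _.
- by rewrite -eqAP2 submxMl.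
- by rewrite -eqAP2T submx_tr_mul_1_add ?unitmx_1_add.
Qed.
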